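(* Let $K\in\mathcal B(H)$, let $\Lambda=\{(W_j,\Lambda_j,v_j)\}_{j\in J}$ be a $K$-g-fusion frame for $H$ with g-fusion frame operator $S_\Lambda$, and let $U\in\mathcal B(H)$ be invertible. The following are equivalent: (I) $\Gamma=\{(UW_j,\ \Lambda_jP_{W_j}U^*,\ v_j)\}_{j\in J}$ is a $UK$-g-fusion frame for $H$; (II) the quotient operator $[(UK)^*/S_\Lambda^{1/2}U^*]$ is (well defined and) bounded; (III) the quotient operator $[(UK)^*/(US_\Lambda U^* )^{1/2}]$ is (well defined and) bounded.
   Context: $H$ is a separable Hilbert space, $J$ a countable index set, $\{H_j\}_{j\in J}$ Hilbert spaces, and $P_W$ the orthogonal projection onto a closed subspace $W$. For closed subspaces $W_j\subseteq H$, weights $v_j>0$, $\Lambda_j\in\mathcal{B}(H,H_j)$ and $K\in\mathcal B(H)$, $\{(W_j,\Lambda_j,v_j)\}_{j\in J}$ is a $K$-g-fusion frame if there exist $0<A\le B<\infty$ with $A\|K^*f\|^2\le\sum_j v_j^2\|\Lambda_jP_{W_j}f\|^2\le B\|f\|^2$ for all $f\in H$. Its g-fusion frame operator is $S_\Lambda f=\sum_{j}v_j^2P_{W_j}\Lambda_j^*\Lambda_jP_{W_j}f$, a bounded positive self-adjoint operator, and $S_\Lambda^{1/2}$ denotes its positive square root. For $A_0,B_0\in\mathcal B(H)$ with $\mathcal N(B_0)\subseteq\mathcal N(A_0)$, the quotient operator $[A_0/B_0]:\mathcal R(B_0)\to\mathcal R(A_0)$ is the linear map $B_0f\mapsto A_0f$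 ($f\in H$); it is bounded if there is $C>0$ with $\|A_0f\|\le C\|B_0f\|$ for all $f\in H$. *)

From HB Require Import structures.
From mathcomp Require Import all_boot all_order all_algebra.
From mathcomp Require Import all_classical all_reals all_analysis.
From mathcomp Require Import complex.
Set Implicit Arguments. Unset Strict Implicit. Unset Printing Implicit Defensive.
Import Order.TTheory GRing.Theory Num.Theory.
Local Open Scope ring_scope.
Local Open Scope classical_set_scope.

Record HilbertSpace (R : realType) := {
  hcarrier :> lmodType R[i];
  hinner : hcarrier -> hcarrier -> R[i];
  hinner_linear : forall (a : R[i]) (x y z : hcarrier),
      hinner (a *: x + y) z = a * hinner x z + hinner y z;
  hinner_conj : forall x y : hcarrier, hinner y x = conjc (hinner x y);
  hinner_ge0 : forall x : hcarrier, 0 <= hinner x x;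
  hinner_eq0 : forall x : hcarrier, hinner x x = 0 -> x = 0;
  hcomplete : forall u : nat -> hcarrier,
      (forall e : R, 0 < e -> exists N : nat, forall m n : nat, (N <= m)%N -> (N <= n)%N ->
         Num.sqrt (complex.Re (hinner (u m - u n) (u m - u n))) < e) ->
      exists x : hcarrier, forall e : R, 0 < e -> exists N : nat, forall n : nat, (N <= n)%N ->
         Num.sqrt (complex.Re (hinner (u n - x) (u n - x))) < e
}.

Section HilbertDefs.
Variable R : realType.

Definition hnorm (H : HilbertSpace R) (x : H) : R :=
  Num.sqrt (complex.Re (hinner x x)).

Definition separable (H : HilbertSpace R) : Prop :=
  exists d : nat -> H, forall (x : H) (e : R), 0 < e ->
    exists n : nat, hnorm (x - d n) < e.

Definition bounded_op (H1 H2 : HilbertSpace R) (T : H1 -> H2) : Prop :=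
  (forall (a : R[i]) (x y : H1), T (a *: x + y) = a *: T x + T y) /\
  exists M : R, forall x : H1, hnorm (T x) <= M * hnorm x.

Definition is_adjoint (H1 H2 : HilbertSpace R) (T : H1 -> H2) (Tadj : H2 -> H1) : Prop :=
  bounded_op Tadj /\ forall (x : H1) (y : H2), hinner (T x) y = hinner x (Tadj y).

Definition invertible_op (H : HilbertSpace R) (U : H -> H) : Prop :=
  bounded_op U /\ exists V : H -> H, bounded_op V /\ U \o V = id /\ V \o U = id.

Definition closed_subspace (H : HilbertSpace R) (W : set H) : Prop :=
  W 0 /\ (forall (a : R[i]) (x y : H), W x -> W y -> W (a *: x + y)) /\
  (forall (u : nat -> H) (x : H), (forall n, W (u n)) ->
     (forall e : R, 0 < e -> exists N : nat, forall n : nat, (N <= n)%N -> hnorm (u n - x) < e) ->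
     W x).

Definition is_orth_proj (H : HilbertSpace R) (W : set H) (P : H -> H) : Prop :=
  forall x : H, W (P x) /\ forall w : H, W w -> hinner (x - P x) w = 0.

Definition is_pos_sqrt (H : HilbertSpace R) (T Q : H -> H) : Prop :=
  bounded_op Q /\ is_adjoint Q Q /\ (forall x : H, 0 <= hinner (Q x) x) /\
  (forall x : H, Q (Q x) = T x).

(* unconditional convergence of a family of vectors indexed by a countable J:
   the net of finite partial sums converges to s *)
Definition has_sum (J : countType) (H : HilbertSpace R) (F : J -> H) (s : H) : Prop :=
  forall e : R, 0 < e -> exists A0 : seq J, forall A : seq J, uniq A ->
    {subset A0 <= A} -> hnorm (\sum_(j <- A) F j - s) < e.

(* {(W_j, Lam_j, v_j)} is a K-g-fusion frame for H, where P j is the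
   orthogonal projection onto W j and Kadj = K^* *)
Definition K_gfusion_frame (J : countType) (H : HilbertSpace R) (Hs : J -> HilbertSpace R)
    (W : J -> set H) (P : J -> H -> H) (Lam : forall j, H -> Hs j) (v : J -> R)
    (Kadj : H -> H) : Prop :=
  (forall j, closed_subspace (W j)) /\ (forall j, is_orth_proj (W j) (P j)) /\
  (forall j, bounded_op (Lam j)) /\ (forall j, 0 < v j) /\
  exists A B : R, 0 < A /\ A <= B /\ forall f : H,
    ((A * hnorm (Kadj f) ^+ 2)%:E <=
       \esum_(j in [set: J]) ((v j) ^+ 2 * hnorm (Lam j (P j f)) ^+ 2)%:E)%E /\
    (\esum_(j in [set: J]) ((v j) ^+ 2 * hnorm (Lam j (P j f)) ^+ 2)%:E <=
       (B * hnorm f ^+ 2)%:E)%E.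

(* the quotient operator [A0/B0] : R(B0) -> R(A0) is well defined
   (N(B0) \subseteq N(A0)) and bounded *)
Definition quotient_op_bounded (H : HilbertSpace R) (A0 B0 : H -> H) : Prop :=
  (forall f : H, B0 f = 0 -> A0 f = 0) /\
  exists C : R, 0 < C /\ forall f : H, hnorm (A0 f) <= C * hnorm (B0 f).

End HilbertDefs.

From HB Require Import structures.
From mathcomp Require Import all_boot all_order all_algebra.
From mathcomp Require Import all_classical all_reals all_analysis.
From mathcomp Require Import complex.
From mathcomp Require Import ring lra.
Import Order.TTheory GRing.Theory Num.Theory.
Local Open Scope ring_scope.
Local Open Scope classical_set_scope.

(* Everything reduces to the single function f |-> ||S^{1/2}U^* f||:
   - the frame sums of Lambda at g are <S g, g> = ||S^{1/2} g||^2
     ([gfusion_frame_sum]), and since P_W U^* P_{UW} = P_W U^*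
     ([proj_adjoint_image]) the frame sums of Gamma at f are those of
     Lambda at U^* f, i.e. ||S^{1/2}U^* f||^2;
   - ||(USU^* )^{1/2} f|| = ||S^{1/2}U^* f|| ([pos_sqrt_congruence_norm]);
   - since S^{1/2}U^* is bounded, Gamma is a UK-g-fusion frame iff the lower
     bound A ||(UK)^* f||^2 <= ||S^{1/2}U^* f||^2 holds
     ([gfusion_frame_iff_lower_bound]), and such a lower bound is exactly the
     boundedness of the quotient operator ([lower_bound_quotient]). *)

Section InnerProduct.
Context {R : realType} {H : HilbertSpace R}.
Implicit Types (x y z : H) (t : R).

Lemma ipDl x y z : hinner (x + y) z = hinner x z + hinner y z.
Proof. by have := hinner_linear 1 x y z; rewrite scale1r mul1r. Qed.

Lemma ip0l z : hinner 0 z = 0.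
Proof. by apply: (@addrI _ (hinner 0 z)); rewrite -ipDl !addr0. Qed.

Lemma ipZl (a : R[i]) x z : hinner (a *: x) z = a * hinner x z.
Proof. by have := hinner_linear a x 0 z; rewrite !addr0 ip0l addr0. Qed.

Lemma ipNl x z : hinner (- x) z = - hinner x z.
Proof. by rewrite -scaleN1r ipZl mulN1r. Qed.

Lemma ipBl x y z : hinner (x - y) z = hinner x z - hinner y z.
Proof. by rewrite ipDl ipNl. Qed.

Lemma ipBr x y z : hinner z (x - y) = hinner z x - hinner z y.
Proof. by rewrite hinner_conj ipBl rmorphB /= -!hinner_conj. Qed.

Lemma ip_suml (I : Type) (s : seq I) (F : I -> H) z :
  hinner (\sum_(i <- s) F i) z = \sum_(i <- s) hinner (F i) z.
Proof.
elim: s => [|i s IH]; first by rewrite !big_nil ip0l.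
by rewrite !big_cons ipDl IH.
Qed.

Lemma Re_hinnerC x y : complex.Re (hinner y x) = complex.Re (hinner x y).
Proof. by rewrite hinner_conj; case: (hinner x y) => a b. Qed.

Lemma Re_hinnerZl t x y : complex.Re (hinner (t%:C%C *: x) y) = t * complex.Re (hinner x y).
Proof. by rewrite ipZl; case: (hinner x y) => a b /=; rewrite mul0r subr0. Qed.

Lemma hnorm_ge0 x : 0 <= hnorm x.
Proof. exact: sqrtr_ge0. Qed.

Lemma hnorm_sqr x : hnorm x ^+ 2 = complex.Re (hinner x x).
Proof. by apply: sqr_sqrtr; have := hinner_ge0 x; rewrite lecE => /andP[]. Qed.

Lemma hinner_self x : hinner x x = (hnorm x ^+ 2)%:C%C.
Proof.
rewrite hnorm_sqr; move: (ger0_Im (hinner_ge0 x)).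
by case: (hinner x x) => a b /= ->.
Qed.

Lemma hnorm0 : hnorm (0 : H) = 0.
Proof. by rewrite /hnorm ip0l sqrtr0. Qed.

Lemma hnorm_eq0 x : hnorm x = 0 -> x = 0.
Proof. by move=> nx0; apply: hinner_eq0; rewrite hinner_self nx0 expr0n. Qed.

Lemma hnormB2 x y :
  hnorm (x - y) ^+ 2 = hnorm x ^+ 2 + hnorm y ^+ 2 - 2 * complex.Re (hinner x y).
Proof. rewrite !hnorm_sqr ipBl !ipBr !raddfB /= (Re_hinnerC y x); lra. Qed.

Lemma hnormZ2 t x : hnorm (t%:C%C *: x) ^+ 2 = t ^+ 2 * hnorm x ^+ 2.
Proof. by rewrite !hnorm_sqr Re_hinnerZl Re_hinnerC Re_hinnerZl mulrA -expr2. Qed.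

Lemma Re_hinner_le x y : `|complex.Re (hinner x y)| <= hnorm x * hnorm y.
Proof.
set r := complex.Re (hinner x y); set a := hnorm x; set b := hnorm y.
have [a0|a_neq0] := eqVneq a 0.
  by rewrite /r (hnorm_eq0 _ a0) ip0l normr0 mulr_ge0 ?hnorm_ge0.
have a_gt0 : 0 < a by rewrite lt0r a_neq0 hnorm_ge0.
(* expand 0 <= ||t x - y||^2 at the minimising t = r / a^2 *)
set t := r / a ^+ 2.
have := sqr_ge0 (hnorm (t%:C%C *: x - y)).
rewrite hnormB2 hnormZ2 Re_hinnerZl -/a -/b -/r.
have ta : t * a ^+ 2 = r by rewrite /t mulfVK // expf_neq0.
have ab0 : 0 <= a * b by rewrite mulr_ge0 ?hnorm_ge0.
move=> quad; rewrite ler_norml; apply/andP; split; nra.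
Qed.

Lemma Re_hinner_small g {eps : R} : 0 < eps ->
  exists2 e : R, 0 < e & forall d : H, hnorm d < e -> `|complex.Re (hinner d g)| < eps.
Proof.
move=> eps0; have g1 : 0 < hnorm g + 1 by have := hnorm_ge0 g; lra.
exists (eps / (hnorm g + 1)) => [|d]; first exact: divr_gt0.
rewrite ltr_pdivlMr // => hd; apply: le_lt_trans (Re_hinner_le d g) _.
have := hnorm_ge0 d; have := hnorm_ge0 g; nra.
Qed.

End InnerProduct.

Definition real_has_sum {R : realType} {J : countType} (a : J -> R) (r : R) : Prop :=
  forall e : R, 0 < e -> exists A0 : seq J, forall A : seq J, uniq A ->
    {subset A0 <= A} -> `|\sum_(j <- A) a j - r| < e.

Lemma has_sum_Re_hinner {R : realType} {J : countType} {H : HilbertSpace R}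
    {F : J -> H} {s : H} (g : H) :
  has_sum F s -> real_has_sum (fun j => complex.Re (hinner (F j) g)) (complex.Re (hinner s g)).
Proof.
move=> sumF eps eps0; have [e e0 small] := Re_hinner_small g eps0.
have [A0 hA0] := sumF e e0; exists A0 => A uA sA.
by rewrite -raddf_sum -raddfB -ip_suml -ipBl; apply/small/hA0.
Qed.

Lemma esum_real_has_sum {R : realType} {J : countType} (a : J -> R) (r : R) :
  (forall j, 0 <= a j) -> real_has_sum a r ->
  (\esum_(j in [set: J]) (a j)%:E = r%:E)%E.
Proof.
move=> a0 sum_a; apply/eqP; rewrite eq_le; apply/andP; split.
  (* each finite partial sum is at most r + eps, for every eps > 0 *)
  apply: ge_ereal_sup => _ [X [finX _] <-].
  rewrite fsbig_finite //= sumEFin lee_fin.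
  set s := finmap.enum_fset (fset_set X).
  apply/ler_addgt0Pr => eps eps0; have [A0 hA0] := sum_a eps eps0.
  (* complete s to an index list containing A0 *)
  set A := s ++ [seq j <- undup A0 | j \notin s].
  have uA : uniq A.
    rewrite cat_uniq finmap.fset_uniq filter_uniq ?undup_uniq // andbT.
    by apply/hasPn => j; rewrite mem_filter => /andP[].
  have sA : {subset A0 <= A}.
    move=> j jA0; rewrite mem_cat; case: (boolP (j \in s)) => //= js.
    by rewrite mem_filter js mem_undup.
  have rest_ge0 : 0 <= \sum_(j <- [seq j <- undup A0 | j \notin s]) a j.
    exact: sumr_ge0.
  by have := hA0 A uA sA; rewrite big_cat /= ltr_norml => /andP[_]; lra.
(* the partial sum over A0 is already above r - eps *)
apply/lee_addgt0Pr => eps eps0; have [A0 hA0] := sum_a eps eps0.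
have finA0 : finite_set [set` A0] := finite_seq A0.
set s := finmap.enum_fset (fset_set [set` A0]).
have sA : {subset A0 <= s} by move=> j jA0; rewrite in_fset_set //; exact: mem_set.
have := hA0 s (finmap.fset_uniq _) sA; rewrite ltr_norml => /andP[lo _].
apply: (@le_trans _ _ ((\sum_(j <- s) a j)%:E + eps%:E)%E).
  by rewrite -EFinD lee_fin; lra.
apply: leeD2r; apply: esum_ge; exists [set` A0]; first by split.
by rewrite fsbig_finite //= sumEFin.
Qed.

Section BoundedOperators.
Context {R : realType}.

Lemma lin0 {H1 H2 : HilbertSpace R} {T : H1 -> H2} : bounded_op T -> T 0 = 0.
Proof.
case=> lin _; have := lin 1 0 0; rewrite !scale1r addr0 => T0.
by apply: (@addrI _ (T 0)); rewrite -T0 addr0.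
Qed.

Lemma linB {H1 H2 : HilbertSpace R} {T : H1 -> H2} :
  bounded_op T -> forall x y, T (x - y) = T x - T y.
Proof.
move=> bT x y; have := bT.1 (-1) y x.
by rewrite !scaleN1r addrC => ->; rewrite addrC.
Qed.

Lemma bounded_op_bound {H1 H2 : HilbertSpace R} {T : H1 -> H2} : bounded_op T ->
  exists2 M : R, 0 <= M & forall x, hnorm (T x) <= M * hnorm x.
Proof.
case=> _ [M hM]; exists `|M| => // x; apply: le_trans (hM x) _.
by apply: ler_wpM2r; [exact: hnorm_ge0 | exact: ler_norm].
Qed.

Lemma bounded_op_comp {H1 H2 H3 : HilbertSpace R} {T : H2 -> H3} {S : H1 -> H2} :
  bounded_op T -> bounded_op S -> bounded_op (T \o S).
Proof.
move=> bT bS; split=> [a x y|]; first by rewrite /= bS.1 bT.1.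
have [MT MT0 hT] := bounded_op_bound bT; have [MS _ hS] := bounded_op_bound bS.
exists (MT * MS) => x /=; apply: le_trans (hT _) _.
by rewrite -mulrA ler_wpM2l.
Qed.

End BoundedOperators.

Section OrthogonalProjection.
Context {R : realType} {H : HilbertSpace R} {W : set H} {P : H -> H}.
Hypotheses (W_closed : closed_subspace W) (P_proj : is_orth_proj W P).

Lemma proj_unique z w : W w -> (forall u, W u -> hinner (z - w) u = 0) -> P z = w.
Proof.
move=> Ww orth; case: W_closed => _ [Wlin _].
have Wd : W (P z - w) by rewrite addrC -scaleN1r; apply: Wlin => //; exact: (P_proj z).1.
apply/eqP; rewrite -subr_eq0; apply/eqP/hinner_eq0.
have split_Pz : P z - w = (z - w) - (z - P z).
  by rewrite opprB [RHS]addrC addrA subrK.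
by rewrite {1}split_Pz ipBl orth // (P_proj z).2 // subr0.
Qed.

Lemma proj_hinner_sym x y : hinner (P x) y = hinner x (P y).
Proof.
have orth u v : hinner (u - P u) (P v) = 0 := (P_proj u).2 _ (P_proj v).1.
have /eqP : hinner (P x) (y - P y) = 0 by rewrite hinner_conj orth rmorph0.
rewrite ipBr subr_eq0 => /eqP ->.
by have /eqP := orth x y; rewrite ipBl subr_eq0 => /eqP ->.
Qed.

(* Pythagoras: ||P x||^2 = ||x||^2 - ||x - P x||^2 *)
Lemma proj_norm_le x : hnorm (P x) <= hnorm x.
Proof.
have orth : hinner (x - P x) (P x) = 0 := (P_proj x).2 _ (P_proj x).1.
have cross : complex.Re (hinner x (x - P x)) = hnorm (x - P x) ^+ 2.
  by rewrite Re_hinnerC hnorm_sqr [in RHS]ipBr orth subr0.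
rewrite -ler_sqr ?nnegrE ?hnorm_ge0 // -{1}(subKr x (P x)) hnormB2 cross.
by have := sqr_ge0 (hnorm (x - P x)); lra.
Qed.

Lemma proj_bounded : bounded_op P.
Proof.
split; last by exists 1 => x; rewrite mul1r proj_norm_le.
move=> a x y; apply: proj_unique.
  by case: W_closed => _ [Wlin _]; apply: Wlin; [exact: (P_proj x).1 | exact: (P_proj y).1].
move=> u Wu; have -> : a *: x + y - (a *: P x + P y) = a *: (x - P x) + (y - P y).
  by rewrite scalerBr opprD addrACA.
by rewrite ipDl ipZl (P_proj x).2 // (P_proj y).2 // mulr0 addr0.
Qed.

End OrthogonalProjection.

Lemma adjoint_hinnerl {R : realType} {H1 H2 : HilbertSpace R}
    {T : H1 -> H2} {Tadj : H2 -> H1} :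
  is_adjoint T Tadj -> forall x y, hinner (Tadj y) x = hinner y (T x).
Proof. by move=> adjT x y; rewrite hinner_conj -adjT.2 -hinner_conj. Qed.

(* An invertible operator maps closed subspaces to closed subspaces:
   U W is the preimage of W under the bounded inverse of U. *)
Lemma image_closed_subspace {R : realType} {H : HilbertSpace R} {U : H -> H} {W : set H} :
  invertible_op U -> closed_subspace W -> closed_subspace (U @` W).
Proof.
case=> bU [V [bV [UV VU]]] [W0 [Wlin Wcl]].
have UVx x : U (V x) = x by exact: (congr1 (@^~ x) UV).
have VUx x : V (U x) = x by exact: (congr1 (@^~ x) VU).
split; first by exists 0 => //; exact: lin0 bU.
split=> [a _ _ [x Wx <-] [y Wy <-]|u x Wu ux].
  by exists (a *: x + y); [exact: Wlin | exact: bU.1].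
have VW n : W (V (u n)) by case: (Wu n) => w Ww <-; rewrite VUx.
have [M M0 hM] := bounded_op_bound bV.
exists (V x); last exact: UVx.
apply: (Wcl _ _ VW) => e e0; have eM : 0 < e / (M + 1) by rewrite divr_gt0 //; lra.
have [N hN] := ux _ eM; exists N => n /hN; rewrite ltr_pdivlMr; last lra.
move=> unx; rewrite -(linB bV); apply: le_lt_trans (hM _) _.
by have := hnorm_ge0 (u n - x); nra.
Qed.

(* P_W U^* P_{UW} = P_W U^*: both vectors differ from U^* f by something
   orthogonal to W. *)
Lemma proj_adjoint_image {R : realType} {H : HilbertSpace R} {W : set H} {P Q U Uadj : H -> H} :
  closed_subspace W -> is_orth_proj W P -> is_orth_proj (U @` W) Q -> is_adjoint U Uadj ->
  forall f, P (Uadj (Q f)) = P (Uadj f).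
Proof.
move=> cW hP hQ adjU f; apply: (proj_unique cW hP); first exact: (hP _).1.
move=> u Wu; have bUadj := adjU.1.
have -> : Uadj (Q f) - P (Uadj f) = (Uadj f - P (Uadj f)) - Uadj (f - Q f).
  by rewrite (linB bUadj) opprB [RHS]addrC addrA subrK.
rewrite ipBl (hP _).2 // (adjoint_hinnerl adjU) (hQ f).2; last by exists u.
by rewrite subr0.
Qed.

Lemma gfusion_frame_sum {R : realType} {J : countType} {H : HilbertSpace R}
    {Hs : J -> HilbertSpace R} {W : J -> set H} {P : J -> H -> H}
    {Lam : forall j, H -> Hs j} {Lamadj : forall j, Hs j -> H} {v : J -> R} {g s : H} :
  (forall j, is_orth_proj (W j) (P j)) -> (forall j, is_adjoint (Lam j) (Lamadj j)) ->
  has_sum (fun j => ((v j ^+ 2)%:C)%C *: P j (Lamadj j (Lam j (P j g)))) s ->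
  (\esum_(j in [set: J]) (v j ^+ 2 * hnorm (Lam j (P j g)) ^+ 2)%:E =
    (complex.Re (hinner s g))%:E)%E.
Proof.
move=> hP hL /(has_sum_Re_hinner g) sum_s.
apply: esum_real_has_sum => [j|]; first by rewrite mulr_ge0 ?sqr_ge0.
have term j : complex.Re (hinner ((v j ^+ 2)%:C%C *: P j (Lamadj j (Lam j (P j g)))) g)
            = v j ^+ 2 * hnorm (Lam j (P j g)) ^+ 2.
  by rewrite Re_hinnerZl (proj_hinner_sym (hP j)) (adjoint_hinnerl (hL j)) hnorm_sqr.
by rewrite (funext term) in sum_s.
Qed.

(* ||(U S U^* )^{1/2} f|| = ||S^{1/2} U^* f||, since both squares equal <S U^* f, U^* f>. *)
Lemma pos_sqrt_congruence_norm {R : realType} {H : HilbertSpace R} {S S12 T12 U Uadj : H -> H} :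
  is_pos_sqrt S S12 -> is_pos_sqrt (U \o S \o Uadj) T12 -> is_adjoint U Uadj ->
  forall f, hnorm (T12 f) = hnorm (S12 (Uadj f)).
Proof.
move=> [_ [adjS12 [_ sqS12]]] [_ [adjT12 [_ sqT12]]] adjU f.
by rewrite /hnorm -adjT12.2 sqT12 /= adjU.2 -sqS12 adjS12.2.
Qed.

Lemma le_scale_sqr {R : realType} (a b C : R) : 0 <= a -> 0 <= b -> 0 < C ->
  (C ^- 2 * a ^+ 2 <= b ^+ 2) = (a <= C * b).
Proof.
move=> a0 b0 C0.
by rewrite ler_pdivrMl ?exprn_gt0 // -exprMn ler_sqr ?nnegrE // mulr_ge0 // ltW.
Qed.

(* A lower bound A ||X f||^2 <= ||Y f||^2 is the same as the boundedness
   of the quotient operator [X/Y]; the kernel inclusion comes for free. *)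
Lemma lower_bound_quotient {R : realType} {H : HilbertSpace R} (X Y : H -> H) :
  (exists2 A : R, 0 < A & forall f, A * hnorm (X f) ^+ 2 <= hnorm (Y f) ^+ 2) <->
  quotient_op_bounded X Y.
Proof.
have kernel C : (forall f, hnorm (X f) <= C * hnorm (Y f)) -> forall f, Y f = 0 -> X f = 0.
  move=> bound f Yf0; apply: hnorm_eq0; apply/le_anti.
  by rewrite hnorm_ge0 andbT; have := bound f; rewrite Yf0 hnorm0 mulr0.
split=> [[A A0 low]|[_ [C [C0 bound]]]].
  set C := (Num.sqrt A)^-1.
  have C0 : 0 < C by rewrite invr_gt0 sqrtr_gt0.
  have CA : C ^- 2 = A by rewrite exprVn invrK sqr_sqrtr ?ltW.
  have bound f : hnorm (X f) <= C * hnorm (Y f).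
    by rewrite -le_scale_sqr ?hnorm_ge0 // CA; exact: low.
  by split; [exact: kernel bound | exists C].
exists (C ^- 2) => [|f]; first by rewrite invr_gt0 exprn_gt0.
by rewrite le_scale_sqr ?hnorm_ge0.
Qed.

(* If the frame sums of a family of the right shape are ||Y f||^2 for a
   bounded Y, the upper frame bound is automatic, so the family is a
   K-g-fusion frame exactly when the lower bound holds. *)
Lemma gfusion_frame_iff_lower_bound {R : realType} {J : countType} {H : HilbertSpace R}
    {Hs : J -> HilbertSpace R} (W : J -> set H) (P : J -> H -> H)
    (Lam : forall j, H -> Hs j) (v : J -> R) (Kadj Y : H -> H) :
  (forall j, closed_subspace (W j)) -> (forall j, is_orth_proj (W j) (P j)) ->
  (forall j, bounded_op (Lam j)) -> (forall j, 0 < v j) -> bounded_op Y ->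
  (forall f, \esum_(j in [set: J]) (v j ^+ 2 * hnorm (Lam j (P j f)) ^+ 2)%:E =
               (hnorm (Y f) ^+ 2)%:E)%E ->
  K_gfusion_frame W P Lam v Kadj <->
  exists2 A : R, 0 < A & forall f, A * hnorm (Kadj f) ^+ 2 <= hnorm (Y f) ^+ 2.
Proof.
move=> cW hP bLam v0 bY frame_sum; split.
  case=> _ [_ [_ [_ [A [B [A0 [_ bounds]]]]]]]; exists A => // f.
  by have := (bounds f).1; rewrite frame_sum lee_fin.
case=> A A0 low; have [M M0 hM] := bounded_op_bound bY.
do 4![split=> //]; exists A, (Num.max A (M ^+ 2)).
split=> //; split=> [|f]; first by rewrite le_max lexx.
rewrite frame_sum !lee_fin; split; first exact: low.
apply: (@le_trans _ _ (M ^+ 2 * hnorm f ^+ 2)).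
  by rewrite -exprMn ler_sqr ?nnegrE ?mulr_ge0 ?hnorm_ge0 //; exact: hM.
by rewrite ler_wpM2r ?sqr_ge0 // le_max lexx orbT.
Qed.

Theorem theorem4p4 (R : realType) (J : countType) (H : HilbertSpace R)
  (Hs : J -> HilbertSpace R)
  (K Kadj : H -> H) (U Uadj UKadj : H -> H)
  (W : J -> set H) (P : J -> H -> H) (Lam : forall j, H -> Hs j)
  (Lamadj : forall j, Hs j -> H) (v : J -> R)
  (S S12 T12 : H -> H) (Q : J -> H -> H) :
  separable H ->
  bounded_op K -> is_adjoint K Kadj ->
  K_gfusion_frame W P Lam v Kadj ->
  (forall j, is_adjoint (Lam j) (Lamadj j)) ->
  (* S = S_Lambda, the g-fusion frame operator *)
  (forall f : H, has_sum (fun j => (((v j) ^+ 2)%:C)%C *: P j (Lamadj j (Lam j (P j f)))) (S f)) ->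
  (* S12 = S_Lambda^{1/2} *)
  is_pos_sqrt S S12 ->
  invertible_op U -> is_adjoint U Uadj ->
  (* UKadj = (UK)^* *)
  is_adjoint (U \o K) UKadj ->
  (* T12 = (U S_Lambda U^* )^{1/2} *)
  is_pos_sqrt (U \o S \o Uadj) T12 ->
  (* Q j = P_{U W_j} *)
  (forall j, is_orth_proj (U @` W j) (Q j)) ->
  ((K_gfusion_frame (fun j => U @` W j) Q (fun j => Lam j \o P j \o Uadj) v UKadj
      <-> quotient_op_bounded UKadj (S12 \o Uadj)) /\
   (quotient_op_bounded UKadj (S12 \o Uadj)
      <-> quotient_op_bounded UKadj T12)).
Proof.
move=> _ _ _ [cW [hP [bLam [v0 _]]]] hL hS hS12 hU adjU _ hT12 hQ.
have bY : bounded_op (S12 \o Uadj) := bounded_op_comp hS12.1 adjU.1.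
(* the frame sums of Gamma at f are those of Lambda at U^* f, i.e. ||S^{1/2} U^* f||^2 *)
have frame_sum f : (\esum_(j in [set: J]) (v j ^+ 2 *
    hnorm ((Lam j \o P j \o Uadj) (Q j f)) ^+ 2)%:E = (hnorm (S12 (Uadj f)) ^+ 2)%:E)%E.
  under eq_esum => j _ do rewrite /= (proj_adjoint_image (cW j) (hP j) (hQ j) adjU).
  rewrite (gfusion_frame_sum hP hL (hS (Uadj f))).
  by case: hS12 => _ [adjS12 [_ sqS12]]; rewrite hnorm_sqr -adjS12.2 sqS12.
have T12_norm := pos_sqrt_congruence_norm hS12 hT12 adjU.
rewrite -!lower_bound_quotient; split.
  apply: gfusion_frame_iff_lower_bound frame_sum => // j.
  - exact: image_closed_subspace hU (cW j).
  - exact: bounded_op_comp (bounded_op_comp (bLam j) (proj_bounded (cW j) (hP j))) adjU.1.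
by split=> -[A A0 low]; exists A => // f; [rewrite T12_norm | rewrite /= -T12_norm]; exact: low.
Qed.
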